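(* Let $(X,d)$ be a compact metric space, $f_{0,\infty}=\{f_n\}_{n=0}^\infty$ a sequence of continuous self-maps of $X$, $A=\{a_i\}_{i=1}^{\infty}\in\mathcal{S}$, $nA=\{na_i\}_{i=1}^{\infty}$, and $\sigma(a_1,a_2,\dots)=(a_2,a_3,\dots)$ the shift. Then (i) $h_{A}(f_{0,\infty}^{n})=h_{nA}(f_{0,\infty})$ for all $n\geq1$; (ii) $h_A(f_{0,\infty})=h_{\sigma^k(A)}(f_{0,\infty})$ for all $k\geq1$.
   Context: $f_i^n=f_{i+n-1}\circ\cdots\circ f_i$ ($n\ge1$), $f_i^0=\mathrm{id}$, $f_i^{-n}(B)=(f_i^n)^{-1}(B)$. The $n$-th compositions system is $f_{0,\infty}^n=\{f_{kn}^n\}_{k=0}^\infty$, i.e. the sequence of maps $f_{kn+n-1}\circ\cdots\circ f_{kn}$, $k\ge0$. $\mathcal S$ is the set of strictly increasing sequences of nonnegative integers. For a sequence of continuous self-maps $g_{0,\infty}$ and $A\in\mathcal S$, $h_A(g_{0,\infty})=\sup_{\mathscr A}\limsup_{m\to\infty}\frac1m\log\mathcal N(\bigvee_{i=1}^m g_0^{-a_i}\mathscr A)$ over finite open covers $\mathscr A$, with $\bigvee$ the common refinement and $\mathcal N$ the minimal cardinality of a subcover. *)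

From Stdlib Require Lists.List.
From HB Require Import structures.
From mathcomp Require Import all_boot all_order all_algebra.
From mathcomp Require Import all_classical all_reals all_analysis.
Set Implicit Arguments. Unset Strict Implicit. Unset Printing Implicit Defensive.
Import Order.TTheory GRing.Theory Num.Theory.
Local Open Scope classical_set_scope.
Local Open Scope ring_scope.

Fixpoint comp {X : Type} (f : nat -> X -> X) (i n : nat) : X -> X :=
  match n with
  | 0 => id
  | n'.+1 => f (i + n')%N \o comp f i n'
  end.

Definition nth_comp_system {X : Type} (f : nat -> X -> X) (n : nat) : nat -> X -> X :=
  fun k => comp f (k * n)%N n.

(* A in S : strictly increasing sequence of nonnegative integers, a 0 = a_1 *)
Definition strictly_incr (a : nat -> nat) : Prop := forall i, (a i < a i.+1)%N.

Definition open_cover {X : topologicalType} (U : seq (set X)) : Prop :=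
  (forall A, Stdlib.Lists.List.In A U -> open A) /\ (forall x, exists A, Stdlib.Lists.List.In A U /\ A x).

Definition join {X : Type} (Us : seq (seq (set X))) : seq (set X) :=
  foldr (fun U acc => [seq A `&` B | A <- U, B <- acc]) [:: setT] Us.

(* minimal cardinality of a subcover (0 if U does not cover) *)
Definition has_subcover_of_size {X : Type} (U : seq (set X)) (n : nat) : Prop :=
  exists s : seq (set X), size s = n /\ (forall A, Stdlib.Lists.List.In A s -> Stdlib.Lists.List.In A U) /\
    (forall x, exists A, Stdlib.Lists.List.In A s /\ A x).

Definition Ncov {X : Type} (U : seq (set X)) : nat :=
  match pselect (exists n, `[< has_subcover_of_size U n >]) with
  | left pf => ex_minn pf
  | right _ => 0%N
  end.

(* \bigvee_{i=1}^m g_0^{-a_i} U, with a_i = a (i-1) *)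
Definition join_preimages {X : Type} (g : nat -> X -> X) (a : nat -> nat)
  (U : seq (set X)) (m : nat) : seq (set X) :=
  join [seq [seq comp g 0 (a i) @^-1` B | B <- U] | i <- iota 0 m].

Definition seq_entropy {R : realType} {X : topologicalType}
  (g : nat -> X -> X) (a : nat -> nat) : \bar R :=
  ereal_sup [set limn_esup (fun m : nat =>
                 ((ln ((Ncov (join_preimages g a U m.+1))%:R : R)) / (m.+1)%:R)%:E)
            | U in [set U : seq (set X) | open_cover U]].

From Pilot Require Import Defs.
From HB Require Import structures.
From mathcomp Require Import all_boot all_order all_algebra.
From mathcomp Require Import all_classical all_reals all_analysis.
From mathcomp Require Import ring.
Set Implicit Arguments. Unset Strict Implicit. Unset Printing Implicit Defensive.
Import Order.TTheory GRing.Theory Num.Theory.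
Local Open Scope classical_set_scope.
Local Open Scope ring_scope.
Notation In := List.In.

(* (i) is a mere identity: the time-[a i] map of the [n]-th compositions system
   is [f_0^(n * a i)], so both entropies are computed from the same joins.
   (ii) For a fixed cover [U], write [P m] and [Q m] for the minimal subcover
   sizes of the joins along [a] and along its [k]-fold shift.  Dropping the
   first [k] preimage covers gives [Q m <= P (m + k) <= |U|^k Q m], and
   [P m <= |U|^m]; hence [log P (m + k)] and [log Q m] differ by at most
   [k log |U|], and after dividing by [m] the index shift costs only [O(1/m)],
   so both exponential growth rates coincide. *)

Section Covers.
Variable T : Type.
Implicit Types (U V W s : seq (set T)) (l : seq (seq (set T))).

Definition covers U := forall x, exists A, In A U /\ A x.

Lemma In_allpairs_setI U V C :
  In C [seq A `&` B | A <- U, B <- V] <-> exists A B, [/\ In A U, In B V & C = A `&` B].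
Proof.
elim: U => [|A0 U IH] /=; first by split => // -[A [B []]].
rewrite List.in_app_iff List.in_map_iff IH; split.
  by case=> [[B [<- HB]]|[A [B [HA HB ->]]]]; [exists A0, B | exists A, B]; split; tauto.
case=> A [B [[<-|HA] HB ->]]; first by left; exists B.
by right; exists A, B.
Qed.

Lemma In_join_cat l1 l2 C :
  In C (join (l1 ++ l2)) <-> exists A B, [/\ In A (join l1), In B (join l2) & C = A `&` B].
Proof.
elim: l1 C => [|U l1 IH] C /=.
  split; first by move=> HC; exists setT, C; split; rewrite ?setTI; tauto.
  by case=> A [B [[<-|[]] HB ->]]; rewrite setTI.
rewrite In_allpairs_setI; split.
  case=> A0 [D [HA0 /IH [B1 [B2 [HB1 HB2 ->]]] ->]].
  exists (A0 `&` B1), B2; split; rewrite ?setIA //.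
  by apply/In_allpairs_setI; exists A0, B1.
case=> A [B [/In_allpairs_setI [A0 [B1 [HA0 HB1 ->]]] HB ->]].
exists A0, (B1 `&` B); split; rewrite ?setIA //.
by apply/IH; exists B1, B.
Qed.

Lemma covers_join l : (forall U, In U l -> covers U) -> covers (join l).
Proof.
elim: l => [|U l IH] cl x /=; first by exists setT; split; [left|].
have [A [HA Ax]] := cl U (or_introl erefl) x.
have [B [HB Bx]] := IH (fun V HV => cl V (or_intror HV)) x.
by exists (A `&` B); split => //; apply/In_allpairs_setI; exists A, B.
Qed.

Lemma size_join_le l D : (forall U, In U l -> size U <= D)%N ->
  (size (join l) <= D ^ size l)%N.
Proof.
elim: l => [|U l IH] Hl /=; first by rewrite expn0.
rewrite size_allpairs expnS leq_mul ?(Hl U (or_introl erefl)) //.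
exact: IH (fun V HV => Hl V (or_intror HV)).
Qed.

Lemma Ncov_subcover U : covers U ->
  exists s, [/\ size s = Ncov U, (forall A, In A s -> In A U) & covers s].
Proof.
move=> cU; rewrite /Ncov; case: pselect => [ex|]; last first.
  by case; exists (size U); apply/asboolP; exists U.
by case: ex_minnP => n /asboolP [s [? [? ?]]] _; exists s.
Qed.

Lemma Ncov_min U n : has_subcover_of_size U n -> (Ncov U <= n)%N.
Proof.
move=> Un; rewrite /Ncov; case: pselect => [ex|]; last first.
  by case; exists n; apply/asboolP.
by case: ex_minnP => m _; apply; apply/asboolP.
Qed.

Lemma Ncov_le_size U : covers U -> (Ncov U <= size U)%N.
Proof. by move=> cU; apply: Ncov_min; exists U. Qed.

Lemma Ncov_join_cat_le l1 l2 : covers (join l1) -> covers (join l2) ->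
  (Ncov (join (l1 ++ l2)) <= size (join l1) * Ncov (join l2))%N.
Proof.
move=> c1 c2; have [s [<- sl2 cs]] := Ncov_subcover c2.
rewrite -(size_allpairs setI); apply: Ncov_min.
eexists; split; first reflexivity; split.
  move=> C /In_allpairs_setI [A [B [HA HB ->]]].
  by apply/In_join_cat; exists A, B; split => //; apply: sl2.
move=> x; have [A [HA Ax]] := c1 x; have [B [HB Bx]] := cs x.
by exists (A `&` B); split => //; apply/In_allpairs_setI; exists A, B.
Qed.

Lemma refine_subcover V s : (forall C, In C s -> exists B, In B V /\ C `<=` B) ->
  exists s', [/\ size s' = size s, (forall B, In B s' -> In B V) &
    forall C x, In C s -> C x -> exists B, In B s' /\ B x].
Proof.
elim: s => [|C s IH] Hs; first by exists [::]; split => // C x [].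
have [B [HB CB]] := Hs C (or_introl erefl).
have [s' [ss' s'V s'C]] := IH (fun D HD => Hs D (or_intror HD)).
exists (B :: s'); split; first by rewrite /= ss'.
  by move=> B' [<-|]; [|apply: s'V].
move=> D x [<- Dx|HD Dx]; first by exists B; split; [left|apply: CB].
by have [B' [? ?]] := s'C D x HD Dx; exists B'; split; [right|].
Qed.

Lemma Ncov_le_refine V W : covers W ->
  (forall C, In C W -> exists B, In B V /\ C `<=` B) -> (Ncov V <= Ncov W)%N.
Proof.
move=> cW WV; have [s [<- sW cs]] := Ncov_subcover cW.
have [s' [<- s'V s'C]] := refine_subcover (fun C HC => WV C (sW C HC)).
apply: Ncov_min; exists s'; split => //; split => // x.
by have [C [HC Cx]] := cs x; exact: s'C C x HC Cx.
Qed.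

End Covers.

Section GrowthRate.
Context {R : realType}.

Lemma limn_esup_le_reindex (v w : R^nat) (s : nat -> nat) :
  (forall M, \forall m \near \oo, (M <= s m)%N) ->
  (forall eps, 0 < eps -> \forall m \near \oo, v m <= w (s m) + eps) ->
  (limn_esup (fun m => (v m)%:E) <= limn_esup (fun m => (w m)%:E))%E.
Proof.
move=> s_oo vw; apply: le_ereal_inf_tmp => _ [A [n0 _ n0A] <-].
apply/lee_addgt0Pr => eps eps0.
apply: (le_trans (ereal_inf_lbound _)).
  exists [set m | v m <= w (s m) + eps /\ (n0 <= s m)%N]; last reflexivity.
  by near=> m; split; near: m; [exact: vw | exact: s_oo].
apply: ge_ereal_sup => _ [m [vm n0s] <-].
apply: (le_trans (y := ((w (s m))%:E + eps%:E)%E)); first by rewrite -EFinD lee_fin.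
rewrite leeD2r //; apply: ereal_sup_ubound; exists (s m) => //; exact: n0A.
Unshelve. all: by end_near. Qed.

Lemma near_div_natS_le (c eps : R) : 0 < eps -> \forall m \near \oo, c / m.+1%:R <= eps.
Proof.
move=> eps0; exists (Num.bound `|c / eps|) => // m /= hm.
have m0 : (0 : R) < m.+1%:R by rewrite ltr0n.
rewrite ler_pdivrMr //; apply/ltW; rewrite -ltr_pdivrMl //.
rewrite mulrC (le_lt_trans (ler_norm _)) // (lt_le_trans (archi_boundP _)) //.
by rewrite ler_nat leqW.
Qed.

Lemma ln_nat_ge0 (n : nat) : 0 <= ln (n%:R : R).
Proof. by case: n => [|n]; [rewrite ln0 | rewrite ln_ge0 // ler1n]. Qed.

Lemma ler_ln_nat (a b : nat) : (a <= b)%N -> ln (a%:R : R) <= ln b%:R.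
Proof.
case: a => [|a] ab; first by rewrite ln0 // ln_nat_ge0.
by rewrite ler_ln ?ler_nat // posrE ltr0n // (leq_trans _ ab).
Qed.

(* Valid for all naturals thanks to the convention [ln 0 = 0]. *)
Lemma ln_natM_le (D k Q : nat) :
  ln ((D ^ k * Q)%:R : R) <= k%:R * ln D%:R + ln Q%:R.
Proof.
case: Q => [|Q]; first by rewrite muln0 ln0 // addr0 mulr_ge0 // ln_nat_ge0.
case: D => [|D].
  case: k => [|k]; first by rewrite mul0r add0r expn0 mul1n.
  by rewrite exp0n // mul0n ln0 // addr_ge0 ?mulr_ge0 ?ln_nat_ge0.
by rewrite natrM lnM ?posrE ?ltr0n ?expn_gt0 // natrX lnXn ?ltr0n // mulr_natl.
Qed.

Lemma ln_natX_le (D k : nat) : ln ((D ^ k)%:R : R) <= k%:R * ln D%:R.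
Proof. by have := ln_natM_le D k 1; rewrite muln1 ln1 addr0. Qed.

Lemma ler_div_natD (p L : R) (n k : nat) : (0 < n)%N ->
  p <= (n + k)%:R * L -> p / n%:R <= p / (n + k)%:R + k%:R * L / n%:R.
Proof.
move=> n0 pL; have n0R : (0 : R) < n%:R by rewrite ltr0n.
have nk0 : (0 : R) < (n + k)%:R by rewrite ltr0n addn_gt0 n0.
have -> : p / n%:R = p / (n + k)%:R + p / (n + k)%:R * (k%:R / n%:R).
  by rewrite natrD in nk0 *; field; rewrite !gt_eqF.
rewrite lerD2l [k%:R * L]mulrC -[L * _ / _]mulrA.
apply: ler_wpM2r; first exact: divr_ge0.
by rewrite ler_pdivrMr // mulrC.
Qed.

Definition growth_rate (P : nat -> nat) : \bar R :=
  limn_esup (fun m => (ln (P m.+1)%:R / m.+1%:R)%:E).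

Section GrowthRateShift.
Variables (P Q : nat -> nat) (D k : nat).
Hypotheses (P_le_pow : forall m, (P m <= D ^ m)%N)
  (Q_le_P : forall m, (Q m <= P (m + k))%N)
  (P_le_Q : forall m, (P (m + k) <= D ^ k * Q m)%N).

Lemma growth_rate_le_shift : (growth_rate Q <= growth_rate P)%E.
Proof.
apply: (@limn_esup_le_reindex _ _ (addn^~ k)).
  by move=> M; exists M => // m /= Mm; rewrite (leq_trans Mm) ?leq_addr.
move=> eps eps0; near=> m; rewrite -addSn; set p := ln (P (m.+1 + k))%:R.
apply: (@le_trans _ _ (p / m.+1%:R)).
  by apply: ler_wpM2r; rewrite ?invr_ge0 // ler_ln_nat.
apply: le_trans (@ler_div_natD _ (ln D%:R) _ k _ _) _ => //.
  by apply: le_trans (ln_natX_le _ _); rewrite ler_ln_nat.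
by rewrite lerD2l; near: m; exact: near_div_natS_le.
Unshelve. all: by end_near. Qed.

Lemma growth_rate_ge_shift : (growth_rate P <= growth_rate Q)%E.
Proof.
apply: (@limn_esup_le_reindex _ _ (subn^~ k)).
  move=> M; exists (M + k) => // m /= Mm.
  by rewrite leq_subRL ?(leq_trans _ Mm) ?leq_addl // addnC.
move=> eps eps0; near=> m.
have km : (k <= m)%N by near: m; exists k.
have -> : P m.+1 = P ((m - k).+1 + k) by rewrite addSn subnK.
apply: (@le_trans _ _ ((k%:R * ln D%:R + ln (Q (m - k).+1)%:R) / m.+1%:R)).
  apply: ler_wpM2r; first by rewrite invr_ge0.
  by apply: le_trans (ln_natM_le _ _ _); rewrite ler_ln_nat.
rewrite mulrDl addrC lerD //; last by near: m; exact: near_div_natS_le.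
apply: ler_wpM2l; first exact: ln_nat_ge0.
by rewrite lef_pV2 ?posrE ?ltr0n // ler_nat ltnS leq_subr.
Unshelve. all: by end_near. Qed.

End GrowthRateShift.

Lemma growth_rate_eq_shift (P Q : nat -> nat) (D k : nat) :
  (forall m, P m <= D ^ m)%N -> (forall m, Q m <= P (m + k))%N ->
  (forall m, P (m + k) <= D ^ k * Q m)%N -> growth_rate P = growth_rate Q.
Proof.
move=> PD QP PQ; apply/le_anti/andP; split.
  exact: growth_rate_ge_shift PQ.
exact: growth_rate_le_shift PD QP.
Qed.

End GrowthRate.

Section Compositions.
Variables (T : Type) (f : nat -> T -> T).

Lemma compD i p q x :
  Defs.comp f i (p + q)%N x = Defs.comp f (i + p)%N q (Defs.comp f i p x).
Proof. by elim: q => [|q IH] /=; rewrite ?addn0 // addnS /= IH addnA. Qed.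

Lemma comp_nth_comp_system n m :
  Defs.comp (nth_comp_system f n) 0 m = Defs.comp f 0 (m * n)%N.
Proof.
apply: funext => x; elim: m => [|m IH] //=.
by rewrite /nth_comp_system IH mulSnr compD.
Qed.

Lemma join_preimages_nth_comp_system n a U m :
  join_preimages (nth_comp_system f n) a U m = join_preimages f (fun i => n * a i)%N U m.
Proof.
congr join; apply: eq_map => i.
by rewrite comp_nth_comp_system mulnC.
Qed.

End Compositions.

Section Preimages.
Variables (T : Type) (g : nat -> T -> T) (U : seq (set T)).

Definition preimage_covers (b : nat -> nat) (s : seq nat) : seq (seq (set T)) :=
  [seq [seq Defs.comp g 0 (b i) @^-1` B | B <- U] | i <- s].

Lemma join_preimages_addn a k m :
  join_preimages g a U (k + m)%N =
  join (preimage_covers a (iota 0 k) ++ preimage_covers (fun i => a (i + k)%N) (iota 0 m)).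
Proof.
rewrite /join_preimages iotaD map_cat add0n; congr (join (_ ++ _)).
rewrite -[k in iota k]addn0 iotaDl -map_comp; apply: eq_map => i /=.
by rewrite addnC.
Qed.

Lemma size_join_preimage_covers_le b s :
  (size (join (preimage_covers b s)) <= size U ^ size s)%N.
Proof.
rewrite -(size_map (fun i => [seq Defs.comp g 0 (b i) @^-1` B | B <- U]) s).
by apply: size_join_le => V /List.in_map_iff [i [<- _]]; rewrite size_map.
Qed.

Hypothesis cU : covers U.

Lemma covers_preimage_cover b s V : In V (preimage_covers b s) -> covers V.
Proof.
move=> /List.in_map_iff [i [<- _]] x; have [A [HA Ax]] := cU (Defs.comp g 0 (b i) x).
by exists (Defs.comp g 0 (b i) @^-1` A); split => //; apply/List.in_map_iff; exists A.
Qed.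

Lemma covers_join_preimage_covers b s : covers (join (preimage_covers b s)).
Proof. exact: covers_join (@covers_preimage_cover b s). Qed.

Lemma Ncov_join_preimages_le b m : (Ncov (join_preimages g b U m) <= size U ^ m)%N.
Proof.
apply: leq_trans (Ncov_le_size (covers_join_preimage_covers _ _)) _.
by have := size_join_preimage_covers_le b (iota 0 m); rewrite size_iota.
Qed.

Lemma Ncov_join_preimages_shift_le a k m :
  (Ncov (join_preimages g (fun i => a (i + k)%N) U m) <=
   Ncov (join_preimages g a U (k + m)%N))%N.
Proof.
rewrite join_preimages_addn; apply: Ncov_le_refine.
  by apply: covers_join => V /List.in_app_iff [] /covers_preimage_cover.
by move=> C /In_join_cat [A [B [_ HB ->]]]; exists B; split => //; apply: subIsetr.
Qed.

Lemma Ncov_join_preimages_le_shift a k m :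
  (Ncov (join_preimages g a U (k + m)%N) <=
   size U ^ k * Ncov (join_preimages g (fun i => a (i + k)%N) U m))%N.
Proof.
rewrite join_preimages_addn.
apply: leq_trans (Ncov_join_cat_le _ _) _; try exact: covers_join_preimage_covers.
rewrite leq_mul2r; apply/orP; right.
by have := size_join_preimage_covers_le a (iota 0 k); rewrite size_iota.
Qed.

End Preimages.

Theorem lemma4p1 (R : realType) (X : metricType R)
  (f : nat -> X -> X) (a : nat -> nat) :
  compact [set: X] ->
  (forall n, continuous (f n)) ->
  strictly_incr a ->
  (forall n : nat, (1 <= n)%N ->
     seq_entropy (R := R) (nth_comp_system f n) a =
     seq_entropy (R := R) f (fun i => (n * a i)%N)) /\
  (forall k : nat, (1 <= k)%N ->
     seq_entropy (R := R) f a = seq_entropy (R := R) f (fun i => a (i + k)%N)).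
Proof.
move=> _ _ _; split => [n _ | k _]; congr ereal_sup; apply: eq_imagel => U [_ cU].
  by congr limn_esup; apply: funext => m; rewrite join_preimages_nth_comp_system.
apply: (@growth_rate_eq_shift R (fun m => Ncov (join_preimages f a U m))
  (fun m => Ncov (join_preimages f (fun i => a (i + k)%N) U m)) (size U) k).
- exact: Ncov_join_preimages_le.
- by move=> m; rewrite addnC; exact: Ncov_join_preimages_shift_le.
- by move=> m; rewrite addnC; exact: Ncov_join_preimages_le_shift.
Qed.
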